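(* Let $g_1,\dots,g_m\in\mathbb{R}[\mathbf{x}]$, $\mathbf{X}=\{\mathbf{x}\in\mathbb{R}^n:g_1(\mathbf{x})\ge0,\dots,g_m(\mathbf{x})\ge0\}$, and assume the quadratic module $\mathcal{M}(\mathfrak{g})$ is Archimedean. Let $f\in\mathbb{R}[\mathbf{x}]$ be positive on $\mathbf{X}$, let $\mathscr{A}=\operatorname{supp}(f)\cup\bigcup_{j=1}^m\operatorname{supp}(g_j)$, and let $\mathbf{R}$ be a binary matrix whose columns are the sign symmetries of $\mathscr{A}$. Then $f=\sigma_0+\sum_{j=1}^m\sigma_jg_j$ for some sums of squares polynomials $\sigma_0,\dots,\sigma_m$ such that $\mathbf{R}^\intercal\alpha\equiv\mathbf{0}\pmod 2$ for every $\alpha\in\operatorname{supp}(\sigma_j)$, $j=0,\dots,m$.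
   Context: $\mathcal{M}(\mathfrak{g})=\{\sum_{j=0}^m\sigma_jg_j:\sigma_j\text{ sums of squares of polynomials}\}$ with $g_0=1$; it is Archimedean if $N-\|\mathbf{x}\|_2^2\in\mathcal{M}(\mathfrak{g})$ for some $N>0$. The sign symmetries of a finite set $\mathscr{A}\subseteq\mathbb{N}^n$ are all vectors $\mathbf{s}\in\{0,1\}^n$ with $\mathbf{s}^\intercal\alpha\equiv0\pmod2$ for all $\alpha\in\mathscr{A}$. $\operatorname{supp}$ denotes the set of exponents of monomials with nonzero coefficient. *)

From HB Require Import structures.
From mathcomp Require Import all_boot all_order all_algebra.
From mathcomp Require Import reals.
From mathcomp Require Import mpoly.
Set Implicit Arguments. Unset Strict Implicit. Unset Printing Implicit Defensive.
Import GRing.Theory Num.Theory.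
Local Open Scope ring_scope.

Definition is_sos (R : realType) (n : nat) (p : {mpoly R[n]}) : Prop :=
  exists s : seq {mpoly R[n]}, p = \sum_(q <- s) q ^+ 2.

Definition in_qmodule (R : realType) (n m : nat) (g : 'I_m -> {mpoly R[n]})
    (p : {mpoly R[n]}) : Prop :=
  exists (s0 : {mpoly R[n]}) (s : 'I_m -> {mpoly R[n]}),
    [/\ is_sos s0, (forall j, is_sos (s j)) & p = s0 + \sum_(j < m) s j * g j].

Definition archimedean_qmodule (R : realType) (n m : nat)
    (g : 'I_m -> {mpoly R[n]}) : Prop :=
  exists N : R, 0 < N /\ in_qmodule g (N%:MP - \sum_(i < n) 'X_i ^+ 2).

Definition in_basic_set (R : realType) (n m : nat) (g : 'I_m -> {mpoly R[n]})
    (x : 'I_n -> R) : Prop :=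
  forall j, 0 <= (g j).@[x].

Definition supp_set (R : realType) (n m : nat) (f : {mpoly R[n]})
    (g : 'I_m -> {mpoly R[n]}) (a : 'X_{1..n}) : Prop :=
  a \in msupp f \/ exists j, a \in msupp (g j).

Definition sdot (n : nat) (s : 'I_n -> bool) (a : 'X_{1..n}) : nat :=
  (\sum_(i < n) (s i : nat) * a i)%N.

Definition sign_symmetry (n : nat) (A : 'X_{1..n} -> Prop) (s : 'I_n -> bool)
    : Prop :=
  forall a, A a -> ~~ odd (sdot s a).

(* A sign symmetry r acts on R[x] by the ring automorphism x_i |-> (-1)^(r_i) x_i,
   which multiplies the coefficient of x^a by (-1)^(r^T a).  It therefore fixes f
   and every g_j and maps sums of squares to sums of squares, so averaging a Putinar
   certificate f = s_0 + sum_j s_j g_j over the group of sign symmetries gives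
   another certificate.  In it the coefficient of x^a is multiplied by the mean of
   (-1)^(r^T a) over the group, which vanishes as soon as one symmetry has r^T a odd.

   Putinar's Positivstellensatz is proved by the Kadison-Dubois argument.  If -1 is
   not in M(g), let c = sup {r | f - r in M(g)}.  A maximal proper cone C containing
   M(g) and c - f is archimedean and total, so p |-> sup {r | p - r in C} is a
   positive linear functional L.  L kills the ideal generated by f - c, so
   {p | L(q^2 p) >= 0 for all q} is a proper archimedean quadratic module containing
   M(g) and c - f.  On a maximal such quadratic module the same construction is
   multiplicative, i.e. it is evaluation at a point x of X, where f(x) <= c.  Hence
   c > 0, and f = (f - r) + r with 0 < r close to c lies in M(g). *)

From HB Require Import structures.
From mathcomp Require Import all_boot all_order all_algebra.
From mathcomp Require Import reals.
From mathcomp Require Import mpoly.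
From mathcomp Require Import boolp classical_sets.
From mathcomp Require Import ring lra.
Import Order.TTheory GRing.Theory Num.Theory.
Local Open Scope classical_set_scope.
Local Open Scope ring_scope.

Section Preliminaries.
Context {R : realType} {n : nat}.
Local Notation P := {mpoly R[n]}.

Lemma mpolyCVK (k : R) (x : P) : k != 0 -> k^-1%:MP * (k%:MP * x) = x.
Proof. by move=> k0; rewrite mulrA -mpolyCM mulVf // mpolyC1 mul1r. Qed.

Lemma is_sos0 : is_sos (0 : P). Proof. by exists [::]; rewrite big_nil. Qed.

Lemma is_sos_sqr (q : P) : is_sos (q ^+ 2).
Proof. by exists [:: q]; rewrite big_seq1. Qed.

Lemma is_sosD (a b : P) : is_sos a -> is_sos b -> is_sos (a + b).
Proof. by move=> [s ->] [t ->]; exists (s ++ t); rewrite big_cat. Qed.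

Lemma is_sosM (a b : P) : is_sos a -> is_sos b -> is_sos (a * b).
Proof.
move=> [s ->] [t ->]; exists [seq x * y | x <- s, y <- t].
rewrite big_allpairs_dep mulr_suml; apply: eq_bigr => x _.
by rewrite mulr_sumr; apply: eq_bigr => y _; rewrite exprMn.
Qed.

Lemma is_sosC (l : R) : 0 <= l -> is_sos (l%:MP : P).
Proof.
move=> l0; exists [:: (Num.sqrt l)%:MP].
by rewrite big_seq1 -rmorphXn sqr_sqrtr.
Qed.

Lemma is_sos1 : is_sos (1 : P). Proof. by rewrite -mpolyC1; apply: is_sosC. Qed.

End Preliminaries.

Section Modules.
Context {R : realType} {n : nat}.
Local Notation P := {mpoly R[n]}.
Local Notation sos := (@is_sos R n).

Definition module_over (T C : set P) :=
  (forall u v, C u -> C v -> C (u + v)) /\ (forall t u, T t -> C u -> C (t * u)).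

Definition nonneg_const : set P := fun t => exists2 l : R, 0 <= l & t = l%:MP.

Definition maximal_module (T Q : set P) :=
  forall C, Q `<=` C -> module_over T C -> ~ C (-1) -> C `<=` Q.

Definition arch_bounded (C : set P) := forall p, exists N : R, C (N%:MP - p).

Lemma exists_maximal_module {T S : set P} : module_over T S -> ~ S (-1) ->
  exists Q, [/\ S `<=` Q, module_over T Q, ~ Q (-1) & maximal_module T Q].
Proof.
move=> [SD ST] Sn1.
pose ok (A : set P) := module_over T (A `|` S) /\ ~ (A `|` S) (-1).
have [A [[[AD AT] An1] Amax]] : exists A, ok A /\ forall B, A `<` B -> ~ ok B.
  apply: Zorn_bigcup => F Fok Ftot; split; last first.
    by case=> [[X FX X1]|/Sn1//]; have [_] := Fok X FX; apply; left.
  have addX X u v : F X -> (X `|` S) u -> (X `|` S) v ->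
      ((\bigcup_(X in F) X) `|` S) (u + v).
    move=> FX Xu Xv; have [[XD _] _] := Fok X FX.
    by case: (XD u v Xu Xv) => [?|?]; [left; exists X|right].
  split.
  - move=> u v [[X FX Xu]|Su] [[Y FY Yv]|Sv].
    + have [XY|YX] := Ftot X Y FX FY.
      * by apply: (addX Y) => //; left => //; apply: XY.
      * by apply: (addX X) => //; left => //; apply: YX.
    + by apply: (addX X) => //; [left|right].
    + by apply: (addX Y) => //; [right|left].
    + by right; apply: SD.
  - move=> t u Tt [[X FX Xu]|Su]; last by right; apply: ST.
    have [[_ XT] _] := Fok X FX.
    by case: (XT t u Tt (or_introl Xu)) => [?|?]; [left; exists X|right].
exists (A `|` S); split; [by move=> p; right|by split|by []|].
move=> C AC Cmod Cn1 p Cp; apply: contrapT => ACp.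
apply: (Amax C); last by rewrite /ok (setUidl (subset_trans (@subsetUr _ A S) AC)).
by split; [move=> x Ax; apply: AC; left|move=> CA; apply: ACp; left; apply: CA].
Qed.

Lemma proper_cone_const_ge0 {C : set P} {l : R} :
  module_over nonneg_const C -> ~ C (-1) -> C l%:MP -> 0 <= l.
Proof.
move=> [_ CZ] Cn1 Cl; rewrite leNgt; apply/negP => l0; apply: Cn1.
have -> : (-1 : P) = (- l^-1)%:MP * l%:MP.
  by rewrite -mpolyCM mulNr mulVf ?mpolyCN ?mpolyC1 // lt_eqF.
by apply: CZ => //; exists (- l^-1); rewrite // oppr_ge0 invr_le0 ltW.
Qed.

Lemma module_sos_cone {C : set P} : module_over sos C -> module_over nonneg_const C.
Proof. by case=> CD CM; split=> // t u [l l0 ->]; apply: CM; apply: is_sosC. Qed.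

Lemma arch_bounded_has_sup {C : set P} (p : P) :
  module_over nonneg_const C -> ~ C (-1) -> arch_bounded C ->
  has_sup [set r : R | C (p - r%:MP)].
Proof.
move=> Cmod Cn1 Carch; split.
  by have [N] := Carch (- p); rewrite opprK addrC => CN; exists (- N); rewrite /= mpolyCN opprK.
have [N CN] := Carch p; exists N => r Cr; rewrite -subr_ge0.
apply: (proper_cone_const_ge0 Cmod Cn1); rewrite mpolyCB.
by rewrite (_ : _ - _ = (N%:MP - p) + (p - r%:MP)); [case: Cmod => CD _; apply: CD|ring].
Qed.

Section Adjoin.
Context {T : set P}.
Hypotheses (TD : forall a b, T a -> T b -> T (a + b))
  (TM : forall a b, T a -> T b -> T (a * b)) (T0 : T 0) (T1 : T 1).

Definition adjoin (Q : set P) (v : P) : set P :=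
  fun p => exists u t, [/\ Q u, T t & p = u + t * v].

Lemma module_adjoin Q v : module_over T Q -> module_over T (adjoin Q v).
Proof.
move=> [QD QT]; split.
  move=> _ _ [u [t [Qu Tt ->]]] [u' [t' [Qu' Tt' ->]]].
  by exists (u + u'), (t + t'); split; [exact: QD|exact: TD|ring].
move=> s _ Ts [u [t [Qu Tt ->]]].
by exists (s * u), (s * t); split; [exact: QT|exact: TM|ring].
Qed.

Lemma maximal_module_adjoin {Q v} : module_over T Q -> Q 0 -> maximal_module T Q ->
  ~ Q v -> adjoin Q v (-1).
Proof.
move=> Qmod Q0 Qmax Qv; apply: contrapT => Qvn1; apply: Qv.
apply: (Qmax (adjoin Q v)) => //; last by exists 0, 1; split; rewrite ?add0r ?mul1r.
- by move=> p Qp; exists p, 0; split; rewrite ?mul0r ?addr0.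
- exact: module_adjoin.
Qed.

End Adjoin.

Lemma nonneg_constD a b : nonneg_const a -> nonneg_const b -> nonneg_const (a + b).
Proof. by move=> [l l0 ->] [k k0 ->]; exists (l + k); rewrite ?mpolyCD ?addr_ge0. Qed.

Lemma nonneg_constM a b : nonneg_const a -> nonneg_const b -> nonneg_const (a * b).
Proof. by move=> [l l0 ->] [k k0 ->]; exists (l * k); rewrite ?mpolyCM ?mulr_ge0. Qed.

Lemma nonneg_const0 : nonneg_const 0. Proof. by exists 0; rewrite ?mpolyC0. Qed.

Lemma nonneg_const1 : nonneg_const 1. Proof. by exists 1; rewrite ?mpolyC1. Qed.

Lemma maximal_cone_total Q : module_over nonneg_const Q -> Q 0 -> ~ Q (-1) ->
  maximal_module nonneg_const Q -> forall v, Q v \/ Q (- v).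
Proof.
move=> Qmod Q0 Qn1 Qmax v; apply: contrapT => /not_orP[Qv Qnv].
have [u1 [_ [Qu1 [l1 l10 ->] e1]]] :=
  maximal_module_adjoin nonneg_constD nonneg_constM nonneg_const0 nonneg_const1 Qmod Q0 Qmax Qv.
have [u2 [_ [Qu2 [l2 l20 ->] e2]]] :=
  maximal_module_adjoin nonneg_constD nonneg_constM nonneg_const0 nonneg_const1 Qmod Q0 Qmax Qnv.
case: Qmod => QD QZ.
have [l1z|l1n] := eqVneq l1 0.
  by apply: Qn1; rewrite e1 l1z mpolyC0 mul0r addr0.
have l_gt0 : 0 < l1 + l2 by rewrite ltr_pwDl // lt_def l1n.
have Qsum : Q (- (l1 + l2)%:MP).
  have -> : - (l1 + l2)%:MP = l2%:MP * u1 + l1%:MP * u2.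
    have -> : u1 = -1 - l1%:MP * v by rewrite e1; ring.
    have -> : u2 = -1 + l2%:MP * v by rewrite e2; ring.
    by rewrite mpolyCD; ring.
  by apply: QD; apply: QZ => //; [exists l2|exists l1].
apply: Qn1; rewrite -(mpolyCVK _ (-1) (lt0r_neq0 l_gt0)) mulrN1.
by apply: QZ => //; exists (l1 + l2)^-1; rewrite ?invr_ge0 ?ltW.
Qed.

Lemma maximal_qmodule_total Q : module_over sos Q -> Q 0 -> Q 1 -> ~ Q (-1) ->
  maximal_module sos Q -> forall v, Q v \/ Q (- v).
Proof.
move=> Qmod Q0 Q1 Qn1 Qmax v; apply: contrapT => /not_orP[Qv Qnv].
have [u1 [t1 [Qu1 St1 e1]]] :=
  maximal_module_adjoin is_sosD is_sosM is_sos0 is_sos1 Qmod Q0 Qmax Qv.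
have [u2 [t2 [Qu2 St2 e2]]] :=
  maximal_module_adjoin is_sosD is_sosM is_sos0 is_sos1 Qmod Q0 Qmax Qnv.
case: Qmod => QD QM.
have Qt t : is_sos t -> Q t by move=> St; rewrite -[t]mulr1; apply: QM.
have Qnt1 : Q (- t1).
  have -> : - t1 = t2 + (t2 * u1 + t1 * u2).
    have -> : u1 = -1 - t1 * v by rewrite e1; ring.
    have -> : u2 = -1 + t2 * v by rewrite e2; ring.
    ring.
  by apply: (QD); [apply: Qt|apply: QD; apply: QM].
apply: Qn1; rewrite e1; apply: (QD) => //.
(* polarization: [4 v = (v + 1)^2 - (v - 1)^2] *)
have -> : t1 * v = (2^-1%:MP * (v + 1)) ^+ 2 * t1 + (2^-1%:MP * (v - 1)) ^+ 2 * (- t1).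
  have h2 : (2^-1%:MP * (1 + 1)) ^+ 2 = 1 :> P.
    by rewrite -mpolyC1 -mpolyCD -mpolyCM mulVf ?pnatr_eq0 // expr1n.
  by transitivity (t1 * v * (2^-1%:MP * (1 + 1)) ^+ 2); [rewrite h2 mulr1|ring].
have Qt1 := Qt _ St1.
by apply: QD; apply: QM => //; apply: is_sos_sqr.
Qed.

End Modules.

Section States.
Context {R : realType} {n : nat}.
Local Notation P := {mpoly R[n]}.
Local Notation sos := (@is_sos R n).

Definition arch_total_cone (C : set P) :=
  [/\ module_over nonneg_const C, ~ C (-1), arch_bounded C & forall v, C v \/ C (- v)].

Definition state (C : set P) (p : P) : R := sup [set r : R | C (p - r%:MP)].

Definition infinitesimal (C : set P) (u : P) :=
  forall e : R, 0 < e -> C (e%:MP + u) /\ C (e%:MP - u).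

Lemma maximal_cone_ext {S : set P} : module_over nonneg_const S -> S 1 -> ~ S (-1) ->
  arch_bounded S -> exists2 C, S `<=` C & arch_total_cone C.
Proof.
move=> Smod S1 Sn1 Sarch.
have [C [SC Cmod Cn1 Cmax]] := exists_maximal_module Smod Sn1.
have C0 : C 0.
  by rewrite -(mul0r 1); case: Cmod => _; apply; [exists 0; rewrite ?mpolyC0|apply: SC].
exists C => //; split => //; last exact: maximal_cone_total.
by move=> p; have [N] := Sarch p; exists N; apply: SC.
Qed.

Lemma maximal_qmodule_ext {S : set P} : module_over sos S -> S 1 -> ~ S (-1) ->
  arch_bounded S -> exists2 C, S `<=` C & module_over sos C /\ arch_total_cone C.
Proof.
move=> Smod S1 Sn1 Sarch.
have [C [SC Cmod Cn1 Cmax]] := exists_maximal_module Smod Sn1.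
have C1 : C 1 by apply: SC.
have C0 : C 0 by rewrite -(mul0r 1); case: Cmod => _; apply; [apply: is_sos0|].
exists C => //; split => //; split => //; first exact: module_sos_cone.
- by move=> p; have [N] := Sarch p; exists N; apply: SC.
- exact: maximal_qmodule_total.
Qed.

Section ArchTotalCone.
Context {C : set P} (HC : arch_total_cone C).

Let coneD u v : C u -> C v -> C (u + v).
Proof. by case: HC => [[CD _] _ _ _]; apply: CD. Qed.

Let coneZ l u : 0 <= l -> C u -> C (l%:MP * u).
Proof. by case: HC => [[_ CZ] _ _ _] l0; apply: CZ; exists l. Qed.

Let cone_const_ge0 l : C l%:MP -> 0 <= l.
Proof. by case: HC => Cmod Cn1 _ _; apply: proper_cone_const_ge0. Qed.

Let cone_const l : 0 <= l -> C l%:MP.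
Proof.
case: HC => _ Cn1 _ /(_ 1) [C1|//] l0.
by rewrite -[l%:MP]mulr1; apply: coneZ.
Qed.

Lemma state_infinitesimal p : infinitesimal C (p - (state C p)%:MP).
Proof.
have hs : has_sup [set r : R | C (p - r%:MP)].
  by case: HC => Cmod Cn1 Carch _; apply: arch_bounded_has_sup.
move=> e e0; split.
  have [r Cr ltr] := sup_adherent e0 hs.
  have -> : e%:MP + (p - (state C p)%:MP) = (p - r%:MP) + (r - (state C p - e))%:MP.
    by rewrite /state; ring.
  by apply: coneD => //; apply: cone_const; rewrite subr_ge0 ltW.
case: HC => _ _ _ /(_ (e%:MP - (p - (state C p)%:MP))) [//|Cneg].
have /(sup_upper_bound hs) : C (p - (state C p + e)%:MP).
  by move: Cneg; congr C; ring.
by rewrite /= -/(state C p) gerDl leNgt e0.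
Qed.

Lemma infinitesimal_const_eq0 a : infinitesimal C a%:MP -> a = 0.
Proof.
move=> Ia; apply/eqP; rewrite -normr_le0; apply/ler_addgt0Pr => e e0.
have [Cea Cnea] := Ia e e0.
move: Cea Cnea; rewrite -mpolyCD -mpolyCB => /cone_const_ge0 ? /cone_const_ge0 ?.
by rewrite add0r ler_norml; apply/andP; split; lra.
Qed.

Lemma infinitesimal0 : infinitesimal C 0.
Proof. by move=> e e0; rewrite addr0 subr0; split; apply: cone_const; rewrite ltW. Qed.

Lemma infinitesimalN {u} : infinitesimal C u -> infinitesimal C (- u).
Proof. by move=> Iu e e0; rewrite opprK; case: (Iu e e0). Qed.

Lemma infinitesimalD {u v} : infinitesimal C u -> infinitesimal C v -> infinitesimal C (u + v).
Proof.
move=> Iu Iv e e0; have e2 : 0 < e / 2 by rewrite divr_gt0.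
have [Cu1 Cu2] := Iu _ e2; have [Cv1 Cv2] := Iv _ e2.
have -> : e = e / 2 + e / 2 by field.
rewrite mpolyCD; split.
  by rewrite (_ : _ + _ = ((e/2)%:MP + u) + ((e/2)%:MP + v)); [apply: coneD|ring].
by rewrite (_ : _ - _ = ((e/2)%:MP - u) + ((e/2)%:MP - v)); [apply: coneD|ring].
Qed.

Lemma infinitesimalZ l {u} : infinitesimal C u -> infinitesimal C (l%:MP * u).
Proof.
wlog l0 : l u / 0 <= l.
  move=> H Iu; have [/H|l_lt0] := leP 0 l; first exact.
  rewrite -mulrNN -mpolyCN; apply: H; [by rewrite oppr_ge0 ltW|exact: infinitesimalN].
move=> Iu; have [->|l_neq0] := eqVneq l 0; first by rewrite mpolyC0 mul0r; apply: infinitesimal0.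
have l_gt0 : 0 < l by rewrite lt_def l_neq0.
move=> e e0; pose d := e / l.
have [Cd1 Cd2] := Iu d (divr_gt0 e0 l_gt0).
have -> : e = l * d by rewrite /d mulrC divfK.
by rewrite mpolyCM -mulrDr -mulrBr; split; apply: coneZ.
Qed.

Lemma state_unique p a : infinitesimal C (p - a%:MP) -> state C p = a.
Proof.
move=> Ia; have := infinitesimalD (state_infinitesimal p) (infinitesimalN Ia).
rewrite (_ : _ + _ = (a - state C p)%:MP); last by ring.
by move/infinitesimal_const_eq0/eqP; rewrite subr_eq0 => /eqP.
Qed.

Lemma stateD p q : state C (p + q) = state C p + state C q.
Proof.
apply: state_unique; have := infinitesimalD (state_infinitesimal p) (state_infinitesimal q).
by congr infinitesimal; ring.
Qed.

Lemma stateZ l p : state C (l%:MP * p) = l * state C p.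
Proof.
apply: state_unique; have := infinitesimalZ l (state_infinitesimal p).
by congr infinitesimal; ring.
Qed.

Lemma stateC l : state C l%:MP = l.
Proof. by apply: state_unique; rewrite subrr; apply: infinitesimal0. Qed.

Lemma stateN p : state C (- p) = - state C p.
Proof. by rewrite -mulN1r -mpolyC1 -mpolyCN stateZ mulN1r. Qed.

Lemma state_ge0 {p} : C p -> 0 <= state C p.
Proof.
move=> Cp; apply/ler_addgt0Pr => e e0; apply: cone_const_ge0.
have [_ Cle] := state_infinitesimal p e e0.
by rewrite (_ : _%:MP = p + (e%:MP - (p - (state C p)%:MP))); [apply: coneD|ring].
Qed.

Lemma state_mul_eq0 {h} : (forall q, 0 <= state C (q ^+ 2 * h)) -> state C h <= 0 ->
  forall q, state C (q * h) = 0.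
Proof.
move=> Lsqr h_le0.
have h0 : state C h = 0 by have := Lsqr 1; rewrite expr1n mul1r; lra.
move=> q; set a := state C (q * h); set b := state C (q ^+ 2 * h).
have b0 : 0 <= b := Lsqr q.
set k := (b + 1)^-1.
have k0 : 0 < k by rewrite invr_gt0; lra.
have kb : k * b + k = 1 by rewrite -[X in _ + X]mulr1 -mulrDr mulVf //; lra.
have neg : k * (k * b - 2) < 0 by rewrite pmulr_rlt0 //; lra.
(* test positivity on [(1 - a k q)^2 h], whose state [a^2 k (k b - 2)] is negative unless [a = 0] *)
have := Lsqr (1 + (- a * k)%:MP * q).
rewrite (_ : (1 + _) ^+ 2 * h =
  h + (2 * (- a * k))%:MP * (q * h) + ((- a * k) ^+ 2)%:MP * (q ^+ 2 * h)); last by ring.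
rewrite !stateD !stateZ h0 -/a -/b add0r.
rewrite (_ : _ + _ = a ^+ 2 * (k * (k * b - 2))); last by ring.
rewrite nmulr_lge0 // => a2_le0.
by apply/eqP; rewrite -sqrf_eq0 eq_le a2_le0 sqr_ge0.
Qed.

Lemma state_sqr_module : module_over sos [set p | forall q, 0 <= state C (q ^+ 2 * p)].
Proof.
have state0 : state C 0 = 0 by rewrite -mpolyC0 stateC.
split=> [u v /= Su Sv q|_ u [s ->] /= Su q]; first by rewrite mulrDr stateD addr_ge0.
rewrite mulr_suml mulr_sumr (big_morph _ stateD state0) sumr_ge0 // => r _.
by rewrite mulrA -exprMn.
Qed.

End ArchTotalCone.

Section ArchTotalQModule.
Context {C : set P} (HC : arch_total_cone C) (HS : module_over sos C).

Lemma infinitesimal_sqr {u} {d : R} : infinitesimal C u -> 0 < d -> C (d%:MP - u ^+ 2).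
Proof.
case: HC => [[CD CZ] _ _ _]; case: HS => _ CM.
move=> Iu d0; set e := Num.sqrt d.
have e0 : 0 < e by rewrite sqrtr_gt0.
have [Ce1 Ce2] := Iu e e0.
have -> : d%:MP = e%:MP ^+ 2 :> P by rewrite -rmorphXn sqr_sqrtr // ltW.
rewrite -(mpolyCVK _ (e%:MP ^+ 2 - u ^+ 2) (lt0r_neq0 (mulr_gt0 (ltr0Sn _ 1) e0))).
apply: CZ; first by exists (2 * e)^-1; rewrite // invr_ge0 mulr_ge0 // ltW.
have -> : (2 * e)%:MP * (e%:MP ^+ 2 - u ^+ 2) =
   (e%:MP + u) ^+ 2 * (e%:MP - u) + (e%:MP - u) ^+ 2 * (e%:MP + u) by ring.
by apply: CD; apply: CM => //; apply: is_sos_sqr.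
Qed.

Lemma infinitesimalM {u v} : infinitesimal C u -> infinitesimal C v -> infinitesimal C (u * v).
Proof.
move=> Iu Iv e e0.
have Cu := infinitesimal_sqr Iu e0; have Cv := infinitesimal_sqr Iv e0.
case: HC => [[CD CZ] _ _ _]; case: HS => _ CM.
have C1 : C 1 by case: HC => _ Cn1 _ /(_ 1) [].
have half w : C (2%:MP * w) -> C w.
  move=> C2w; have two : (2 : R) != 0 by rewrite pnatr_eq0.
  by rewrite -(mpolyCVK _ w two); apply: CZ => //; exists 2^-1; rewrite // invr_ge0.
have Csqr w : C (w ^+ 2) by rewrite -[_ ^+ 2]mulr1; apply: CM => //; apply: is_sos_sqr.
split; apply: half.
  rewrite (_ : _ * _ = (u + v) ^+ 2 + ((e%:MP - u ^+ 2) + (e%:MP - v ^+ 2))); last by ring.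
  by apply: (CD) => //; apply: (CD).
rewrite (_ : _ * _ = (u - v) ^+ 2 + ((e%:MP - u ^+ 2) + (e%:MP - v ^+ 2))); last by ring.
by apply: (CD) => //; apply: (CD).
Qed.

Lemma stateM p q : state C (p * q) = state C p * state C q.
Proof.
apply: (state_unique HC).
have Ip := state_infinitesimal HC p; have Iq := state_infinitesimal HC q.
have := infinitesimalD HC (infinitesimalD HC (infinitesimalZ HC (state C p) Iq)
  (infinitesimalZ HC (state C q) Ip)) (infinitesimalM Ip Iq).
by congr infinitesimal; ring.
Qed.

End ArchTotalQModule.

Lemma mpoly_eval_morph {phi : P -> R} : {morph phi : p q / p + q} ->
  {morph phi : p q / p * q} -> (forall c, phi c%:MP = c) ->
  forall p, phi p = p.@[fun i => phi 'X_i].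
Proof.
move=> phiD phiM phiC p.
have phi0 : phi 0 = 0 by rewrite -mpolyC0 phiC.
have phi1 : phi 1 = 1 by rewrite -mpolyC1 phiC.
rewrite {1}(mpolyE p) mevalE (big_morph phi phiD phi0); apply: eq_bigr => mm _.
rewrite -mul_mpolyC phiM phiC mpolyXE_id (big_morph phi phiM phi1); congr (_ * _).
apply: eq_bigr => i _; elim: (mm i) => [|k IH]; first by rewrite !expr0 phi1.
by rewrite !exprS phiM IH.
Qed.

Lemma proper_arch_qmodule_point {S : set P} : module_over sos S -> S 1 -> ~ S (-1) ->
  arch_bounded S -> exists x : 'I_n -> R, forall p, S p -> 0 <= p.@[x].
Proof.
move=> Smod S1 Sn1 Sarch.
have [C SC [Cmod HC]] := maximal_qmodule_ext Smod S1 Sn1 Sarch.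
exists (fun i => state C 'X_i) => p Sp.
rewrite -(mpoly_eval_morph (stateD HC) (stateM HC Cmod) (stateC HC)).
exact/(state_ge0 HC)/SC.
Qed.

End States.

Section QuadraticModule.
Context {R : realType} {n m : nat} (g : 'I_m -> {mpoly R[n]}).
Local Notation P := {mpoly R[n]}.
Local Notation sos := (@is_sos R n).
Local Notation M := (in_qmodule g).

Lemma qmodule_sos t : is_sos t -> M t.
Proof.
move=> St; exists t, (fun _ => 0); split=> // [_|]; first exact: is_sos0.
by rewrite big1 ?addr0 // => j _; rewrite mul0r.
Qed.

Lemma qmodule1 : M 1. Proof. exact/qmodule_sos/is_sos1. Qed.

Lemma qmodule_gen j : M (g j).
Proof.
exists 0, (fun k => (k == j)%:R); split; first exact: is_sos0.
  by move=> k; case: (k == j); [exact: is_sos1|exact: is_sos0].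
rewrite add0r (bigD1 j) //= eqxx mul1r big1 ?addr0 // => k /negbTE ->.
by rewrite mul0r.
Qed.

Lemma qmodule_module : module_over sos M.
Proof.
split=> [_ _ [s0 [s [S0 Ss ->]]] [t0 [t [T0 St ->]]]|u _ Su [s0 [s [S0 Ss ->]]]].
  exists (s0 + t0), (fun j => s j + t j); split; [exact: is_sosD|by move=> j; apply: is_sosD|].
  rewrite addrACA -big_split /=; congr (_ + _).
  by apply: eq_bigr => j _; rewrite mulrDl.
exists (u * s0), (fun j => u * s j); split; [exact: is_sosM|by move=> j; apply: is_sosM|].
by rewrite mulrDr mulr_sumr; congr (_ + _); apply: eq_bigr => j _; rewrite mulrA.
Qed.

Lemma qmodule_improper : M (-1) -> forall p, M p.
Proof.
have [MD MS] := qmodule_module.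
move=> Mn1 p; have two : (2 : R) != 0 by rewrite pnatr_eq0.
have -> : p = (2^-1%:MP * (p + 1)) ^+ 2 * 1 + (2^-1%:MP * (p - 1)) ^+ 2 * (-1).
  rewrite -[LHS](mpolyCVK _ _ two) -[LHS](mpolyCVK _ _ two); ring.
by apply: (MD); apply: (MS) => //; [apply: is_sos_sqr|apply: qmodule1|apply: is_sos_sqr].
Qed.

Definition sqr_bounded (p : P) := exists2 N : R, 0 <= N & M (N%:MP - p ^+ 2).

Lemma sqr_boundedC c : sqr_bounded c%:MP.
Proof.
exists (c ^+ 2); rewrite ?sqr_ge0 //.
by rewrite rmorphXn subrr; apply: qmodule_sos; apply: is_sos0.
Qed.

Lemma sqr_boundedD p q : sqr_bounded p -> sqr_bounded q -> sqr_bounded (p + q).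
Proof.
have [MD MS] := qmodule_module.
move=> [N N0 MN] [K K0 MK]; exists (2 * N + 2 * K); first by rewrite addr_ge0 ?mulr_ge0.
have -> : (2 * N + 2 * K)%:MP - (p + q) ^+ 2 =
  2%:MP * (N%:MP - p ^+ 2) + (2%:MP * (K%:MP - q ^+ 2) + (p - q) ^+ 2) by ring.
have S2 : sos 2%:MP by apply: is_sosC.
by apply: (MD); [apply: (MS)|apply: (MD); [apply: (MS)|apply/qmodule_sos/is_sos_sqr]].
Qed.

Lemma sqr_boundedM p q : sqr_bounded p -> sqr_bounded q -> sqr_bounded (p * q).
Proof.
have [MD MS] := qmodule_module.
move=> [N N0 MN] [K K0 MK]; exists (N * K); first by rewrite mulr_ge0.
have -> : (N * K)%:MP - (p * q) ^+ 2 = K%:MP * (N%:MP - p ^+ 2) + p ^+ 2 * (K%:MP - q ^+ 2).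
  by ring.
by apply: (MD); apply: (MS) => //; [apply: is_sosC|apply: is_sos_sqr].
Qed.

Lemma sqr_boundedX p k : sqr_bounded p -> sqr_bounded (p ^+ k).
Proof.
move=> bp; elim: k => [|k IH]; first by rewrite expr0 -mpolyC1; apply: sqr_boundedC.
by rewrite exprS; apply: sqr_boundedM.
Qed.

Lemma archimedean_sqr_bounded : archimedean_qmodule g -> forall p, sqr_bounded p.
Proof.
move=> [N [N0 MN]].
have bX i : sqr_bounded 'X_i.
  exists N; first exact: ltW.
  have -> : N%:MP - 'X_i ^+ 2 =
      (N%:MP - \sum_(k < n) 'X_k ^+ 2) + \sum_(k < n | k != i) 'X_k ^+ 2.
    by rewrite (bigD1 i) //=; ring.
  have [MD _] := qmodule_module; apply: (MD) => //; apply: qmodule_sos.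
  by apply: big_ind => [||k _]; [exact: is_sos0|exact: is_sosD|exact: is_sos_sqr].
move=> p; elim/mpolyind: p => [|c mm p _ _ bp]; first by rewrite -mpolyC0; apply: sqr_boundedC.
apply: sqr_boundedD => //; rewrite -mul_mpolyC mpolyXE_id.
apply: sqr_boundedM; first exact: sqr_boundedC.
apply: big_ind => [||i _]; [rewrite -mpolyC1; exact: sqr_boundedC|exact: sqr_boundedM|].
exact/sqr_boundedX/bX.
Qed.

Lemma archimedean_arch_bounded : archimedean_qmodule g -> arch_bounded M.
Proof.
have [MD MS] := qmodule_module.
move=> ha p; have [N N0 MN] := archimedean_sqr_bounded ha p.
exists ((N + 1) / 2); have two : (2 : R) != 0 by rewrite pnatr_eq0.
rewrite -(mpolyCVK _ (((N + 1) / 2)%:MP - p) two).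
apply: (MS); first by apply: is_sosC; rewrite invr_ge0.
have -> : 2%:MP * (((N + 1) / 2)%:MP - p) = (N%:MP - p ^+ 2) + (1 - p) ^+ 2.
  by rewrite mulrBr -mpolyCM mulrC divfK //; ring.
by apply: (MD) => //; apply/qmodule_sos/is_sos_sqr.
Qed.

End QuadraticModule.

Section Putinar.
Context {R : realType} {n m : nat} (g : 'I_m -> {mpoly R[n]}) (f : {mpoly R[n]}).
Hypotheses (ha : archimedean_qmodule g)
  (f_gt0 : forall x, in_basic_set g x -> 0 < f.@[x]).
Local Notation M := (in_qmodule g).

Section ProperQModule.
Hypothesis Mn1 : ~ M (-1).

Let Mcone : module_over nonneg_const M := module_sos_cone (qmodule_module g).

Let March : arch_bounded M := archimedean_arch_bounded g ha.

Let c := sup [set r : R | M (f - r%:MP)].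

Let f_sup : has_sup [set r : R | M (f - r%:MP)] := arch_bounded_has_sup f Mcone Mn1 March.

Lemma qmodule_f_sub_sup {e : R} : 0 < e -> M (f - c%:MP + e%:MP).
Proof.
move=> e0; have [r Mr ltr] := sup_adherent e0 f_sup.
have -> : f - c%:MP + e%:MP = (f - r%:MP) + (r - (c - e))%:MP by ring.
have [MD _] := qmodule_module g; apply: MD => //.
by apply: qmodule_sos; apply: is_sosC; rewrite subr_ge0 ltW.
Qed.

Lemma arch_total_cone_sup_sub_f :
  exists2 C, M `<=` C & arch_total_cone C /\ C (c%:MP - f).
Proof.
pose S p := exists u l, [/\ M u, 0 <= l & p = u + l%:MP * (c%:MP - f)].
have MS : M `<=` S by move=> p Mp; exists p, 0; rewrite mpolyC0 mul0r addr0.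
have Smod : module_over nonneg_const S.
  have [MD MZ] := Mcone.
  split=> [_ _ [u [l [Mu l0 ->]]] [u' [l' [Mu' l0' ->]]]|_ _ [k k0 ->] [u [l [Mu l0 ->]]]].
    exists (u + u'), (l + l'); rewrite mpolyCD; split; [exact: MD|exact: addr_ge0|ring].
  exists (k%:MP * u), (k * l); rewrite mpolyCM; split; [|exact: mulr_ge0|ring].
  by apply: MZ => //; exists k.
have Sn1 : ~ S (-1).
  move=> [u [l [Mu l0 e]]]; have [l_eq0|l_neq0] := eqVneq l 0.
    by apply: Mn1; rewrite e l_eq0 mpolyC0 mul0r addr0.
  have l_gt0 : 0 < l by rewrite lt_def l_neq0.
  (* [u = -1 - l (c - f)] puts [f - (c + 1 / l)] in [M], against the choice of [c] *)
  suff /(sup_upper_bound f_sup) : M (f - (c + l^-1)%:MP).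
    by rewrite /= -/c gerDl leNgt invr_gt0 l_gt0.
  have -> : f - (c + l^-1)%:MP = l^-1%:MP * u.
    have -> : u = -1 - l%:MP * (c%:MP - f) by rewrite e; ring.
    by rewrite mulrBr mpolyCVK // mulrN1 mpolyCD; ring.
  by case: Mcone => _; apply => //; exists l^-1; rewrite ?invr_ge0 ?ltW.
have Sarch : arch_bounded S by move=> p; have [N MN] := March p; exists N; apply: MS.
have [C SC HC] := maximal_cone_ext Smod (MS _ (qmodule1 g)) Sn1 Sarch.
exists C; first by move=> p /MS /SC.
split=> //; apply: SC; exists 0, 1.
by rewrite mpolyC1 mul1r add0r; split=> //; apply/qmodule_sos/is_sos0.
Qed.

Lemma basic_point_le_sup : exists2 x, in_basic_set g x & f.@[x] <= c.
Proof.
have [MD MS] := qmodule_module g.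
have [C MC [HC Ccf]] := arch_total_cone_sup_sub_f.
have Lsqr q : 0 <= state C (q ^+ 2 * (f - c%:MP)).
  apply/ler_addgt0Pr => e e0.
  set b := state C (q ^+ 2).
  have b0 : 0 <= b by apply/(state_ge0 HC)/MC/qmodule_sos/is_sos_sqr.
  have d0 : 0 < e / (b + 1) by rewrite divr_gt0 //; lra.
  have := state_ge0 HC (MC _ (MS _ _ (is_sos_sqr q) (qmodule_f_sub_sup d0))).
  rewrite mulrDr (stateD HC) (mulrC _ (_%:MP)) (stateZ HC) -/b.
  have : e / (b + 1) * b <= e by rewrite mulrAC ler_pdivrMr; [nra|lra].
  lra.
have Lfc : state C (f - c%:MP) <= 0.
  by rewrite -opprB (stateN HC) oppr_le0; apply: state_ge0.
pose Q := [set p | forall q, 0 <= state C (q ^+ 2 * p)].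
have MQ : M `<=` Q by move=> p Mp q; apply/(state_ge0 HC)/MC/MS => //; apply: is_sos_sqr.
have Qn1 : ~ Q (-1).
  by move/(_ 1); rewrite expr1n mul1r -mpolyC1 -mpolyCN (stateC HC); lra.
have Qarch : arch_bounded Q by move=> p; have [N MN] := March p; exists N; apply: MQ.
have [x Qx] := proper_arch_qmodule_point (state_sqr_module HC) (MQ _ (qmodule1 g)) Qn1 Qarch.
exists x; first by move=> j; apply/Qx/MQ/qmodule_gen.
have /Qx : Q (c%:MP - f).
  by move=> q; rewrite -opprB mulrN (stateN HC) (state_mul_eq0 HC Lsqr Lfc) oppr0.
by rewrite mevalB mevalC subr_ge0.
Qed.

Lemma putinar_proper : M f.
Proof.
have [x /f_gt0 fx_gt0 fx_le] := basic_point_le_sup.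
have c2 : 0 < c / 2 by lra.
have [r Mr ltr] := sup_adherent c2 f_sup.
rewrite -(subrK r%:MP f); have [MD _] := qmodule_module g; apply: MD => //.
by apply/qmodule_sos/is_sosC; rewrite -/c in ltr; lra.
Qed.

End ProperQModule.

Theorem putinar : M f.
Proof. by have [/qmodule_improper|/putinar_proper] := pselect (M (-1)). Qed.

End Putinar.

Section Symmetrization.
Context {R : realType} {n m : nat} (g : 'I_m -> {mpoly R[n]}) (f : {mpoly R[n]}).
Local Notation P := {mpoly R[n]}.
Local Notation A := (supp_set f g).

Definition sign_var (r : 'I_n -> bool) (i : 'I_n) : P := if r i then - 'X_i else 'X_i.

Definition sign_flip (r : 'I_n -> bool) : P -> P := mmap (@mpolyC n R) (sign_var r).

HB.instance Definition _ r := GRing.RMorphism.on (sign_flip r).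

Lemma mmap1_sign_var r mm : mmap1 (sign_var r) mm = ((-1) ^+ sdot r mm)%:MP * 'X_[mm].
Proof.
rewrite /mmap1 mpolyXE_id /sdot -prodrXr rmorph_prod -big_split /=.
apply: eq_bigr => i _; rewrite /sign_var.
case: (r i); last by rewrite mul0n expr0 mpolyC1 mul1r.
by rewrite mul1n (exprNn ('X_i : P)) rmorphXn rmorphN1.
Qed.

Lemma mcoeff_sign_flip r p a : (sign_flip r p)@_a = (-1) ^+ sdot r a * p@_a.
Proof.
have -> : sign_flip r p = \sum_(mm <- msupp p) ((-1) ^+ sdot r mm * p@_mm) *: 'X_[mm].
  by apply: eq_bigr => mm _; rewrite mmap1_sign_var mulrA -mpolyCM mul_mpolyC mulrC.
rewrite [in RHS](mpolyE p) !raddf_sum /= mulr_sumr; apply: eq_bigr => mm _.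
by rewrite !mcoeffZ mcoeffX; case: eqP => [->|_]; rewrite ?mulr1 ?mulr0.
Qed.

Lemma odd_sdot_addb (r1 r2 : 'I_n -> bool) a :
  odd (sdot (fun i => r1 i (+) r2 i) a) = odd (sdot r1 a) (+) odd (sdot r2 a).
Proof.
rewrite /sdot !(big_morph odd oddD (erefl (odd 0))) -big_split /=.
by apply: eq_bigr => i _; rewrite !oddM; case: (r1 i); case: (r2 i); case: (odd (a i)).
Qed.

Lemma eq_sdot (r1 r2 : 'I_n -> bool) a : r1 =1 r2 -> sdot r1 a = sdot r2 a.
Proof. by move=> e; apply: eq_bigr => i _; rewrite e. Qed.

Lemma sign_flip_id {r p} : sign_symmetry A r -> (forall a, a \in msupp p -> A a) ->
  sign_flip r p = p.
Proof.
move=> Ar pA; apply/mpolyP => a; rewrite mcoeff_sign_flip.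
have [ap|/memN_msupp_eq0 ->] := boolP (a \in msupp p); last by rewrite mulr0.
by rewrite -signr_odd (negbTE (Ar a (pA a ap))) mul1r.
Qed.

(* Sign symmetries are taken as finite functions so that they can be summed over. *)
Definition sign_symmetries : pred {ffun 'I_n -> bool} := fun r => `[< sign_symmetry A r >].
Local Notation G := sign_symmetries.

Definition symmetrize (p : P) : P := #|G|%:R^-1%:MP * \sum_(r in G) sign_flip r p.

Lemma card_sign_symmetries_gt0 : (0 < #|G|)%N.
Proof.
apply/card_gt0P; exists [ffun=> false]; rewrite unfold_in; apply/asboolP => a _.
by rewrite /sdot big1 // => i _; rewrite ffunE.
Qed.

Lemma symmetrizeD p q : symmetrize (p + q) = symmetrize p + symmetrize q.
Proof. by rewrite /symmetrize -mulrDr -big_split /=; under eq_bigr do rewrite raddfD. Qed.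

Lemma symmetrize0 : symmetrize 0 = 0.
Proof. by rewrite /symmetrize big1 ?mulr0 // => r _; rewrite raddf0. Qed.

Lemma symmetrize_id p : (forall a, a \in msupp p -> A a) -> symmetrize p = p.
Proof.
move=> pA; rewrite /symmetrize (eq_bigr (fun=> p)) => [|r /asboolP Ar]; last exact: sign_flip_id.
rewrite sumr_const -[p *+ _]mulr_natl -mpolyC_nat mulrA -mpolyCM.
by rewrite mulVf ?mpolyC1 ?mul1r // pnatr_eq0 -lt0n card_sign_symmetries_gt0.
Qed.

Lemma symmetrizeM_gen p j : symmetrize (p * g j) = symmetrize p * g j.
Proof.
rewrite /symmetrize -mulrA mulr_suml; congr (_ * _); apply: eq_bigr => r /asboolP Ar.
by rewrite rmorphM; congr (_ * _); apply: (sign_flip_id Ar) => a ha; right; exists j.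
Qed.

Lemma is_sos_symmetrize p : is_sos p -> is_sos (symmetrize p).
Proof.
move=> [s ->]; pose c : R := Num.sqrt #|G|%:R^-1.
exists [seq c%:MP * sign_flip r q | r : {ffun _} <- enum G, q <- s].
rewrite big_allpairs_dep /= /symmetrize big_enum /= mulr_sumr; apply: eq_bigr => r _.
rewrite raddf_sum mulr_sumr; apply: eq_bigr => q _.
rewrite exprMn -[c%:MP ^+ 2]rmorphXn sqr_sqrtr ?invr_ge0 //.
by congr (_ * _); apply: rmorphXn.
Qed.

Lemma mcoeff_symmetrize p a :
  (symmetrize p)@_a = #|G|%:R^-1 * (\sum_(r in G) (-1) ^+ sdot r a) * p@_a.
Proof.
rewrite /symmetrize mcoeffCM raddf_sum -mulrA mulr_suml; congr (_ * _).
by apply: eq_bigr => r _; apply: mcoeff_sign_flip.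
Qed.

Lemma sum_sign_sdot_eq0 {r} a : G r -> odd (sdot r a) -> \sum_(t in G) (-1) ^+ sdot t a = 0 :> R.
Proof.
move=> /asboolP Ar odd_ra.
pose shift (t : {ffun 'I_n -> bool}) := [ffun i => t i (+) r i].
have shiftK : involutive shift by move=> t; apply/ffunP => i; rewrite !ffunE addbK.
have odd_shift t b : odd (sdot (shift t) b) = odd (sdot t b) (+) odd (sdot r b).
  by rewrite -odd_sdot_addb; congr odd; apply: eq_sdot => i; rewrite ffunE.
have G_shift t : G (shift t) = G t.
  suff Gs u : G u -> G (shift u) by apply/idP/idP => [/Gs|/Gs//]; rewrite shiftK.
  move=> /asboolP Au; apply/asboolP => b Ab.
  by rewrite odd_shift (negbTE (Au b Ab)) (negbTE (Ar b Ab)).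
(* [shift] permutes [G] and changes the sign of every term *)
suff : \sum_(t in G) (-1) ^+ sdot t a = - \sum_(t in G) (-1) ^+ sdot t a :> R by lra.
rewrite {1}(reindex_inj (inv_inj shiftK)) -sumrN.
apply: eq_big => [t|t _]; first exact: G_shift.
by rewrite -signr_odd odd_shift odd_ra addbT signrN signr_odd.
Qed.

Lemma symmetrize_supp p a : a \in msupp (symmetrize p) ->
  forall r, sign_symmetry A r -> ~~ odd (sdot r a).
Proof.
move=> ha r Ar; apply/negP => odd_ra.
pose r' : {ffun 'I_n -> bool} := [ffun i => r i].
have e t : sdot r' t = sdot r t by apply: eq_sdot => i; rewrite ffunE.
have Gr' : G r' by apply/asboolP => b Ab; rewrite e; apply: Ar.
move: ha; rewrite mcoeff_msupp mcoeff_symmetrize.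
by rewrite (sum_sign_sdot_eq0 a Gr') ?e // mulr0 mul0r eqxx.
Qed.

End Symmetrization.

Theorem theorem7p6 (R : realType) (n m : nat) (g : 'I_m -> {mpoly R[n]})
    (f : {mpoly R[n]}) :
  archimedean_qmodule g ->
  (forall x : 'I_n -> R, in_basic_set g x -> 0 < f.@[x]) ->
  exists (s0 : {mpoly R[n]}) (s : 'I_m -> {mpoly R[n]}),
    [/\ is_sos s0, (forall j, is_sos (s j)),
        f = s0 + \sum_(j < m) s j * g j,
        (forall a, a \in msupp s0 ->
           forall r, sign_symmetry (supp_set f g) r -> ~~ odd (sdot r a)) &
        (forall j a, a \in msupp (s j) ->
           forall r, sign_symmetry (supp_set f g) r -> ~~ odd (sdot r a))].
Proof.
move=> ha f_gt0.
have [s0 [s [S0 Ss ef]]] := putinar g f ha f_gt0.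
exists (symmetrize g f s0), (fun j => symmetrize g f (s j)); split.
- exact: is_sos_symmetrize.
- by move=> j; apply: is_sos_symmetrize.
- transitivity (symmetrize g f (s0 + \sum_(j < m) s j * g j)).
    by rewrite -ef symmetrize_id // => a; left.
  rewrite symmetrizeD (big_morph _ (symmetrizeD g f) (symmetrize0 g f)).
  by congr (_ + _); apply: eq_bigr => j _; apply: symmetrizeM_gen.
- by move=> a; apply: symmetrize_supp.
- by move=> j a; apply: symmetrize_supp.
Qed.
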